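(* Consider the average-cost Markov decision process (MDP) described in the context, with finite state space $\mathcal{S}$ of TAoI values, action set $\mathcal{A}=\{(0,0),(0,1),(1,0),(1,1)\}$, per-step cost $\bar{R}(\Delta,\mathbf{a})=\Delta+\tfrac{1}{2}(L(\mathbf{a})-1)$ and transition probabilities $\bar{p}$. Let $(V^{*},V)$ solve the Bellman equation $$V^{*}+V(s)=\min_{\mathbf{a}\in\mathcal{A}}\Big\{\bar{R}(s,\mathbf{a})+\sum_{s'\in\mathcal{S}}\bar{p}(s'|s,\mathbf{a})V(s')\Big\},\quad \forall s\in\mathcal{S}.$$ Then the value function $V(\Delta)$ is non-decreasing in $\Delta\in\mathcal{S}$.
   Context: Parameters: positive integers $T_1^u<T_2^u$ (transmission latencies, in time slots, of a low- and high-resolution image) and $T_1^c<T_2^c$ (inference latencies of a small and a large language model); success probabilities $p_s,q_s,p_l,q_l\in(0,1]$ associated with actions $(0,0),(1,0),(0,1),(1,1)$ respectively (action $\mathbf{a}=(a^u,a^c)$: $a^u=0/1$ low/high resolution, $a^c=0/1$ small/large model). The duration of action $\mathbf{a}$ is $L((0,0))=T_1^u+T_1^c$, $L((1,0))=T_2^u+T_1^c$, $L((0,1))=T_1^u+T_2^c$, $L((1,1))=T_2^u+T_2^c$. Write $P(\mathbf{a})$ for the success probability of $\mathbf{a}$. The state (task-oriented age of information, TAoI) $\Delta$ takes values in a finite set $\mathcal{S}$ of positive integers bounded by a finite upper limit $\hat{\Delta}$. In the original semi-Markov model, from state $\Delta$ under action $\mathbf{a}$ the next state is $L(\mathbf{a})$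 with probability $P(\mathbf{a})$ and $\min\{\Delta+L(\mathbf{a}),\hat{\Delta}\}$ with probability $1-P(\mathbf{a})$; denote these probabilities $p(s'|s,\mathbf{a})$. The equivalent discrete-time MDP has the same state and action spaces, cost $\bar{R}(\Delta,\mathbf{a})=\Delta+\tfrac12(L(\mathbf{a})-1)$, and transition probabilities $\bar{p}(s'|s,\mathbf{a})=\frac{\epsilon}{L(\mathbf{a})}p(s'|s,\mathbf{a})$ for $s'\neq s$ and $\bar{p}(s|s,\mathbf{a})=1-\frac{\epsilon}{L(\mathbf{a})}\big(1-p(s|s,\mathbf{a})\big)$, where $\epsilon\in(0,\min_{\mathbf{a}}L(\mathbf{a})]$ is fixed. *)

From HB Require Import structures.
From mathcomp Require Import all_boot all_order all_algebra.
Set Implicit Arguments. Unset Strict Implicit. Unset Printing Implicit Defensive.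
Import Order.TTheory GRing.Theory Num.Theory.
Local Open Scope ring_scope.

(* An action a = (a^u, a^c) : bool * bool ; false = 0, true = 1. *)
Definition action := (bool * bool)%type.

Definition dur (T1u T2u T1c T2c : nat) (a : action) : nat :=
  ((if a.1 then T2u else T1u) + (if a.2 then T2c else T1c))%N.

Definition succ {R : pzRingType} (ps qs pl ql : R) (a : action) : R :=
  match a with
  | (false, false) => ps
  | (true, false) => qs
  | (false, true) => pl
  | (true, true) => ql
  end.

Definition ptrans {R : pzRingType} (Lf : action -> nat) (Pf : action -> R)
  (Dhat : nat) (s : nat) (a : action) (s' : nat) : R :=
  Pf a * (s' == Lf a)%:R + (1 - Pf a) * (s' == minn (s + Lf a) Dhat)%:R.

(* Transition probability of the equivalent discrete-time MDP. *)
Definition pbar {R : fieldType} (eps : R) (Lf : action -> nat) (Pf : action -> R)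
  (Dhat : nat) (s : nat) (a : action) (s' : nat) : R :=
  if s' != s then eps / (Lf a)%:R * ptrans Lf Pf Dhat s a s'
  else 1 - eps / (Lf a)%:R * (1 - ptrans Lf Pf Dhat s a s).

Definition Rbar {R : fieldType} (Lf : action -> nat) (s : nat) (a : action) : R :=
  s%:R + ((Lf a)%:R - 1) / 2%:R.

Definition Qval {R : fieldType} (eps : R) (Lf : action -> nat) (Pf : action -> R)
  (Dhat : nat) (S : seq nat) (V : nat -> R) (s : nat) (a : action) : R :=
  Rbar Lf s a + \sum_(s' <- S) pbar eps Lf Pf Dhat s a s' * V s'.

Definition bellman {R : realFieldType} (eps : R) (Lf : action -> nat) (Pf : action -> R)
  (Dhat : nat) (S : seq nat) (Vstar : R) (V : nat -> R) : Prop :=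
  forall s, s \in S ->
    Vstar + V s =
      Num.min (Num.min (Qval eps Lf Pf Dhat S V s (false, false))
                       (Qval eps Lf Pf Dhat S V s (false, true)))
              (Num.min (Qval eps Lf Pf Dhat S V s (true, false))
                       (Qval eps Lf Pf Dhat S V s (true, true))).

From HB Require Import structures.
From mathcomp Require Import all_boot all_order all_algebra.
From mathcomp Require Import ring lra.
Import Order.TTheory GRing.Theory Num.Theory.
Local Open Scope ring_scope.

(* Let (s0, t0) maximise the gap V s - V t over the pairs s <= t of S, and
   suppose s0 < t0.  Playing at s0 the action a that is optimal at t0, the
   Bellman equation gives
     c (V s0 - V t0) <= (s0 - t0) + c (1 - P a) (V s0' - V t0')
   with c = eps / L a >= 0 and s0' <= t0' the failure successors.  The cost
   term is negative and the successor gap is at most the maximal one, so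
   c D < c (1 - P a) D <= c D for D = V s0 - V t0 >= 0, which is absurd.
   Hence the maximal gap is attained at some s0 = t0 and is zero. *)

Lemma seq_argmax {T : eqType} {d : Order.disp_t} {U : orderType d}
    (f : T -> U) {xs : seq T} :
  xs != [::] -> exists2 x, x \in xs & {in xs, forall y, (f y <= f x)%O}.
Proof.
elim: xs => [|y xs IH] // _.
have [->|/IH [x xin xmax]] := eqVneq xs [::].
  by exists y; rewrite ?mem_seq1 // => z; rewrite mem_seq1 => /eqP ->.
have [fyx|fxy] := leP (f y) (f x).
  exists x; first by rewrite in_cons xin orbT.
  by move=> z; rewrite in_cons => /orP [/eqP ->|/xmax].
exists y; first by rewrite in_cons eqxx.
move=> z; rewrite in_cons => /orP [/eqP ->//|/xmax fzx].
exact: le_trans fzx (ltW fxy).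
Qed.

Lemma sumr_indicator (R : pzSemiRingType) (S : seq nat) (x : nat) (F : nat -> R) :
  uniq S -> x \in S -> \sum_(y <- S) (y == x)%:R * F y = F x.
Proof.
move=> uS xS; rewrite (bigD1_seq x) //= eqxx mul1r big1 ?addr0 //.
by move=> y /negbTE ->; rewrite mul0r.
Qed.

Lemma leq_minn2r (m n p : nat) : (m <= n)%N -> (minn m p <= minn n p)%N.
Proof.
by move=> mn; rewrite leq_min geq_minr andbT (leq_trans (geq_minl _ _)).
Qed.

Section Monotonicity.

Context {R : realFieldType} {eps : R} {L : action -> nat} {P : action -> R}.
Context {Dhat : nat} {S : seq nat} {Vstar : R} {V : nat -> R}.

Hypothesis S_uniq : uniq S.
Hypothesis L_in_S : forall a, L a \in S.
Hypothesis next_in_S : forall s a, s \in S -> minn (s + L a) Dhat \in S.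
Hypothesis eps_ge0 : 0 <= eps.
Hypothesis P_prob : forall a, 0 <= P a <= 1.

Local Notation next s a := (minn (s + L a) Dhat).
Local Notation rate a := (eps / (L a)%:R).
Local Notation Q := (Qval eps L P Dhat S V).

Lemma QvalE (s : nat) a : s \in S ->
  Q s a = Rbar L s a + V s + rate a * (P a * V (L a) + (1 - P a) * V (next s a) - V s).
Proof.
move=> sS; rewrite /Qval.
have pbarV s' : pbar eps L P Dhat s a s' * V s' =
    (s' == s)%:R * V s' + rate a * (P a * ((s' == L a)%:R * V s')
      + (1 - P a) * ((s' == next s a)%:R * V s') - (s' == s)%:R * V s').
  by rewrite /pbar /ptrans; case: (eqVneq s' s) => [->|_] /=; rewrite ?eqxx /=; ring.
rewrite (eq_bigr _ (fun s' _ => pbarV s')) big_split /= -mulr_sumr sumrB.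
by rewrite big_split /= -!mulr_sumr !sumr_indicator ?next_in_S ?addrA.
Qed.

Lemma QvalB (s t : nat) a : s \in S -> t \in S ->
  Q s a - Q t a = (s%:R - t%:R) + (1 - rate a) * (V s - V t)
                  + rate a * ((1 - P a) * (V (next s a) - V (next t a))).
Proof. by move=> sS tS; rewrite !QvalE // /Rbar; ring. Qed.

Hypothesis V_bellman : bellman eps L P Dhat S Vstar V.

Lemma bellman_le_Qval (s : nat) a : s \in S -> Vstar + V s <= Q s a.
Proof.
move=> sS; rewrite (V_bellman _ sS).
by case: a => [[] []]; rewrite !ge_min lexx ?orbT.
Qed.

Lemma bellman_optimal_action (s : nat) : s \in S -> exists a, Vstar + V s = Q s a.
Proof.
move=> sS; rewrite (V_bellman _ sS) !minEle.
by do ![case: ifP => _]; eexists.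
Qed.

Lemma optimal_action_gap (s t : nat) a : s \in S -> t \in S -> (s < t)%N ->
  Vstar + V t = Q t a ->
  rate a * (V s - V t) < rate a * ((1 - P a) * (V (next s a) - V (next t a))).
Proof.
move=> sS tS st opt.
have : Vstar + V s - (Vstar + V t) <= Q s a - Q t a.
  by rewrite opt lerD2r bellman_le_Qval.
have cost_lt0 : s%:R - t%:R < 0 :> R by rewrite subr_lt0 ltr_nat.
by rewrite QvalB // mulrBl mul1r; lra.
Qed.

Lemma bellman_nondecreasing : {in S &, {homo V : s t / (s <= t)%N >-> s <= t}}.
Proof.
move=> s t sS tS st.
pose gap (p : nat * nat) := V p.1 - V p.2.
pose pairs := [seq p <- allpairs pair S S | (p.1 <= p.2)%N].
have pairsP x y : x \in S -> y \in S -> (x <= y)%N -> (x, y) \in pairs.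
  by move=> xS yS xy; rewrite mem_filter xy allpairs_f.
have pairs_neq0 : pairs != [::].
  by apply: contraTneq (pairsP _ _ sS sS (leqnn s)) => ->.
have [[s0 t0] p0_in gap_max] := seq_argmax gap pairs_neq0.
have gap_le x y : x \in S -> y \in S -> (x <= y)%N -> V x - V y <= V s0 - V t0.
  by move=> xS yS xy; apply: (gap_max (x, y)); apply: pairsP.
move: p0_in; rewrite mem_filter => /andP[/= st0 p0_in].
have [s0S t0S] : s0 \in S /\ t0 \in S.
  by case/allpairsP: p0_in => -[x y] /= [xS yS [-> ->]].
suff gap0 : V s0 - V t0 <= 0 by rewrite -subr_le0 (le_trans (gap_le s t sS tS st)).
have gap_ge0 : 0 <= V s0 - V t0 by rewrite -(subrr (V s0)) gap_le.
move: st0; rewrite leq_eqVlt => /orP[/eqP <-|lt_st0]; first by rewrite subrr.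
have [a opt] := bellman_optimal_action t0 t0S.
have rate_ge0 : 0 <= rate a by rewrite divr_ge0.
have /andP[Pa_ge0 Pa_le1] := P_prob a.
have next_gap : V (next s0 a) - V (next t0 a) <= V s0 - V t0.
  apply: gap_le; try exact: next_in_S.
  by rewrite leq_minn2r // leq_add2r ltnW.
have damped_gap : (1 - P a) * (V (next s0 a) - V (next t0 a)) <= V s0 - V t0.
  apply: le_trans (_ : (1 - P a) * (V s0 - V t0) <= _).
    by rewrite ler_wpM2l ?subr_ge0.
  by rewrite mulrBl mul1r gerBl mulr_ge0.
have := optimal_action_gap s0 t0 a s0S t0S lt_st0 opt.
by move=> /lt_le_trans /(_ (ler_wpM2l rate_ge0 damped_gap)); rewrite ltxx.
Qed.

End Monotonicity.

Theorem lemma1 (R : realFieldType)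
  (T1u T2u T1c T2c : nat) (ps qs pl ql : R) (Dhat : nat) (S : seq nat)
  (eps Vstar : R) (V : nat -> R) :
  (0 < T1u)%N -> (T1u < T2u)%N -> (0 < T1c)%N -> (T1c < T2c)%N ->
  0 < ps <= 1 -> 0 < qs <= 1 -> 0 < pl <= 1 -> 0 < ql <= 1 ->
  uniq S ->
  (forall s, s \in S -> (0 < s <= Dhat)%N) ->
  (* S is closed under the transitions of the model *)
  (forall a, dur T1u T2u T1c T2c a \in S) ->
  (forall s a, s \in S -> minn (s + dur T1u T2u T1c T2c a) Dhat \in S) ->
  0 < eps -> (forall a, eps <= (dur T1u T2u T1c T2c a)%:R) ->
  bellman eps (dur T1u T2u T1c T2c) (succ ps qs pl ql) Dhat S Vstar V ->
  forall s t, s \in S -> t \in S -> (s <= t)%N -> V s <= V t.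
Proof.
move=> _ _ _ _ /andP[ps_gt0 ps_le1] /andP[qs_gt0 qs_le1] /andP[pl_gt0 pl_le1]
  /andP[ql_gt0 ql_le1] S_uniq _ L_in_S next_in_S /ltW eps_ge0 _ V_bellman.
have P_prob a : 0 <= succ ps qs pl ql a <= 1.
  by case: a => [[] []]; rewrite /= ltW.
exact: (bellman_nondecreasing S_uniq L_in_S next_in_S eps_ge0 P_prob V_bellman).
Qed.
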